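(* Let $(I_t)_{t\in\mathbb{Z}}$ be a stochastic process such that there exists a family $(I_t^n)_{t\in\mathbb{Z}}$, $n\in\mathbb{N}$, of $\{0,1\}$-valued stationary stochastic processes with $P(I_0^n=1)>0$ for all $n$ and $$\mathcal{L}\bigl((I_t^n)_{t\in\{-u,\dots,v\}}\mid I_0^n=1\bigr)\Longrightarrow \mathcal{L}\bigl((I_t)_{t\in\{-u,\dots,v\}}\bigr)\quad (n\to\infty)$$ for all $u,v\in\mathbb{N}$. Define $S_+^i=\sum_{t=1}^\infty I_t$ and $S_-^i=\sum_{t=1}^\infty I_{-t}$ (values in $\mathbb{N}_0\cup\{\infty\}$). (a) The law of $(S_-^i,S_+^i)$ is symmetric (in particular $S_-^i$ and $S_+^i$ have the same distribution; let $S^i_{\pm}$ denote a random variable with this common distribution), and for all $k,\ell\in\mathbb{N}_0$, $$P(S_+^i=k,\ S_-^i\ge \ell)=P(S^i_{\pm}=k+\ell),$$ $$P(S_+^i=k,\ S_-^i=\ell)=P(S^i_{\pm}=k+\ell)-P(S^i_{\pm}=k+\ell+1).$$ (b) The common probability mass function of $S_-^i$ and $S_+^i$ is nonincreasing on $\mathbb{N}_0$: $P(S^i_{\pm}=k)\ge P(S^i_{\pm}=k+1)$ for all $k\in\mathbb{N}_0$.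
   Context: $\mathbb{N}_0=\{0,1,2,\dots\}$. $\mathcal{L}(\cdot\mid\cdot)$ denotes conditional law and $\Longrightarrow$ convergence in distribution. *)

From HB Require Import structures.
From mathcomp Require Import all_boot all_order all_algebra.
From mathcomp Require Import all_classical all_reals all_analysis measurable_realfun.
Set Implicit Arguments. Unset Strict Implicit. Unset Printing Implicit Defensive.
Import Order.TTheory GRing.Theory Num.Theory.
Local Open Scope classical_set_scope.
Local Open Scope ring_scope.

(* A {0,1}-valued process indexed by Z is modelled as X : int -> Omega -> bool
   (true = 1, false = 0). *)

Definition cyl (Omega : Type) (X : int -> Omega -> bool) (u v : nat)
  (p : int -> bool) : set Omega :=
  [set w | forall t : int, (- (u%:Z) <= t <= v%:Z) -> X t w = p t].

Definition bproc_measurable d (Omega : measurableType d)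
  (X : int -> Omega -> bool) : Prop :=
  forall t : int, measurable [set w | X t w].

Definition bstationary d (Omega : measurableType d) (R : realType)
  (P : probability Omega R) (X : int -> Omega -> bool) : Prop :=
  forall (u v : nat) (p : int -> bool) (s : int),
    P (cyl X u v p) = P (cyl (fun t => X (t + s)) u v p).

Definition pr d (Omega : measurableType d) (R : realType)
  (P : probability Omega R) (A : set Omega) : R := fine (P A).

Definition Splus (R : realType) (Omega : Type) (X : int -> Omega -> bool)
  (w : Omega) : \bar R :=
  (\sum_(0 <= k <oo) ((nat_of_bool (X (k.+1)%:Z w))%:R)%:E)%E.

Definition Sminus (R : realType) (Omega : Type) (X : int -> Omega -> bool)
  (w : Omega) : \bar R :=
  (\sum_(0 <= k <oo) ((nat_of_bool (X (- (k.+1)%:Z) w))%:R)%:E)%E.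

(* Conditioning [In n] on [In n 0] and using its stationarity, an event
   that depends on finitely many coordinates and forces [x 0] and [x (- s)] has the same
   conditional probability as its shift by [s]; in the limit the same holds for [I] under
   [P].  Split [{I 0, S+ >= k, S- >= l+1}] according to the position [-(j+1)] of the
   nearest 1 to the left of 0: shifting the [j]-th piece by [j+1] gives the piece of
   [{I 0, S+ >= k+1, S- >= l}] whose nearest 1 to the right of 0 is at [j+1].  As [I 0]
   holds almost surely, P(S+ >= k, S- >= l+1) = P(S+ >= k+1, S- >= l), hence
   P(S+ >= k, S- >= l) = P(S+ >= k+l) = P(S- >= k+l).  Differencing gives the masses
   P(S+ = k, S- = l) = p(k+l) - p(k+l+1), symmetric in k and l and nonnegative, while
   P(S+ = k, S- = oo) <= p(k+l) for every l, and these p(k+l) sum to at most 1. *)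

From HB Require Import structures.
From mathcomp Require Import all_boot all_order all_algebra.
From mathcomp Require Import all_classical all_reals all_analysis measurable_realfun.
From mathcomp Require Import zify lra.
Import Order.TTheory GRing.Theory Num.Theory numFieldNormedType.Exports.
Local Open Scope classical_set_scope.
Local Open Scope ring_scope.
Set Implicit Arguments. Unset Strict Implicit.

Section Ones.
Implicit Types (x y : int -> bool) (a b : int) (n m : nat).

Definition ones x a n : nat := (\sum_(i < n) x (a + i%:Z)%R)%N.

Lemma ones0 x a : ones x a 0 = 0%N.
Proof. by rewrite /ones big_ord0. Qed.

Lemma onesD x a n m : ones x a (n + m) = (ones x a n + ones x (a + n%:Z)%R m)%N.
Proof.
rewrite /ones big_split_ord /=; congr (_ + _)%N; apply: eq_bigr => i _ /=.
by rewrite PoszD addrA.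
Qed.

Lemma onesS x a n : ones x a n.+1 = (ones x a n + x (a + n%:Z)%R)%N.
Proof. by rewrite -addn1 onesD /ones big_ord1 addr0. Qed.

Lemma ones_eq x y a b n :
  (forall i, (i < n)%N -> x (a + i%:Z) = y (b + i%:Z)) -> ones x a n = ones y b n.
Proof. by move=> xy; apply: eq_bigr => i _; rewrite xy. Qed.

Lemma ones_shift x s a n : ones (fun t => x (t + s)) a n = ones x (a + s) n.
Proof. by apply: ones_eq => i _; rewrite addrAC. Qed.

Lemma ones_rev x a n : ones (fun t => x (- t)) a n = ones x (- (a + n%:Z) + 1) n.
Proof.
rewrite /ones (reindex_inj rev_ord_inj) /=; apply: eq_bigr => i _.
by congr x; have := ltn_ord i; lia.
Qed.

Lemma ones_mono x a n m : (n <= m)%N -> (ones x a n <= ones x a m)%N.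
Proof. by move=> nm; rewrite -(subnKC nm) onesD leq_addr. Qed.

Lemma ones_gt0 x a n i : (i < n)%N -> x (a + i%:Z) -> (0 < ones x a n)%N.
Proof. by move=> lt_in xi; rewrite -(subnKC lt_in) onesD onesS xi addn1 addSn. Qed.

Lemma ones_split x n j : (j < n)%N ->
  ones x 1 n = (ones x 1 j + x j.+1%:Z + ones x j.+2%:Z (n - j.+1))%N.
Proof. by move=> jn; rewrite -{1}(subnKC jn) onesD onesS. Qed.

Lemma ones_first x n : (0 < ones x 1 n)%N ->
  exists2 j, (j < n)%N & x j.+1%:Z /\ ones x 1 j = 0%N.
Proof.
elim: n => [|n IH]; first by rewrite ones0.
rewrite onesS; case: (posnP (ones x 1 n)) => [no_one|some_one] h.
  by exists n => //; split => //; move: h; rewrite no_one; case: (x _).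
by case: (IH some_one) => j jn xj; exists j => //; apply: ltnW.
Qed.

End Ones.

Definition nbar (R : realType) (o : option nat) : \bar R :=
  if o is Some n then (n%:R)%:E else +oo%E.

Definition nbar_valued (R : realType) (T : Type) (f : T -> \bar R) :=
  forall w, exists o, f w = nbar R o.

Definition ge_set (R : realType) (T : Type) (f : T -> \bar R) (n : nat) :=
  [set w | ((n%:R)%:E <= f w)%E].

Lemma nbar_inj (R : realType) : injective (nbar R).
Proof. by case=> [n|] [m|] //= [/eqP]; rewrite eqr_nat => /eqP ->. Qed.

Lemma ge_set0 (R : realType) (T : Type) (f : T -> \bar R) :
  nbar_valued f -> ge_set f 0 = setT.
Proof.
move=> fN; apply/seteqP; split => // w _; rewrite /ge_set /=.
by have [[n|] ->] := fN w; rewrite /= ?lee_fin ?ler0n ?leey.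
Qed.

Lemma ge_set_succ (R : realType) (T : Type) (f : T -> \bar R) n :
  ge_set f n.+1 `<=` ge_set f n.
Proof. by move=> w; apply: le_trans; rewrite lee_fin ler_nat. Qed.

Section PartialSums.
Variables (R : realType) (T : Type) (X : int -> T -> bool).
Local Open Scope ereal_scope.

Lemma SminusE : Sminus R X = Splus R (fun t w => X (- t)%R w).
Proof. by []. Qed.

Lemma Splus_sup w :
  Splus R X w = ereal_sup (range (fun n => ((ones (X^~ w) 1 n)%:R)%:E)).
Proof.
rewrite /Splus.
have /ereal_nondecreasing_series/ereal_nondecreasing_cvgn/cvg_lim -> // :
    forall n, (0 <= n)%N -> true -> 0 <= ((nat_of_bool (X n.+1%:Z w))%:R)%:E :> \bar R.
  by move=> n _ _; rewrite lee_fin.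
congr ereal_sup; apply/funext => y; apply/propext.
by split => -[n _ <-]; exists n => //; rewrite big_mkord sumEFin natr_sum.
Qed.

Lemma Splus_geP w n :
  ((n%:R)%:E <= Splus R X w) <-> exists N, (n <= ones (X^~ w) 1 N)%N.
Proof.
rewrite Splus_sup; split => [|[N nN]]; last first.
  apply: (@le_trans _ _ ((ones (X^~ w) 1 N)%:R)%:E); first by rewrite lee_fin ler_nat.
  by apply: ereal_sup_ubound; exists N.
case: n => [|n] nS; first by exists 0%N.
apply: contrapT => /forallNP no_N.
have : ereal_sup (range (fun N => ((ones (X^~ w) 1 N)%:R)%:E)) <= (n%:R)%:E :> \bar R.
  by apply: ge_ereal_sup => _ [N _ <-]; rewrite lee_fin ler_nat leqNgt; apply/negP/no_N.
by move/(le_trans nS); rewrite lee_fin ler_nat ltnn.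
Qed.

Lemma Splus_ge0 w : 0 <= Splus R X w.
Proof. by apply/(Splus_geP w 0); exists 0%N. Qed.

Lemma Splus_nbar : nbar_valued (Splus R X).
Proof.
move=> w; have := Splus_ge0 w.
case E: (Splus R X w) => [r| |] // r0; last by exists None.
have {}r0 : (0 <= r)%R by rewrite -lee_fin.
exists (Some (Num.truncn r)); apply/eqP; rewrite eq_le /= !lee_fin truncn_le r0 andbT.
have ones_le N : (ones (X^~ w) 1 N <= Num.truncn r)%N.
  rewrite leqNgt; apply/negP => lt_r.
  have : ((Num.truncn r).+1%:R)%:E <= Splus R X w by apply/Splus_geP; exists N.
  by rewrite E lee_fin leNgt truncnS_gt.
rewrite -lee_fin -E Splus_sup; apply: ge_ereal_sup => _ [N _ <-].
by rewrite lee_fin ler_nat.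
Qed.

End PartialSums.

Section Finitary.
Implicit Types (x y : int -> bool) (H : (int -> bool) -> bool).

Definition agree (N : nat) x y := forall t : int, - N%:Z <= t <= N%:Z -> x t = y t.

Definition depends_on (N : nat) H := forall x y, agree N x y -> H x = H y.

Definition finitary H := exists N, depends_on N H.

Lemma absz_window (t : int) : - (absz t)%:Z <= t <= (absz t)%:Z.
Proof. by case: t => n /=; rewrite ?NegzE; apply/andP; split; lia. Qed.

Lemma depends_on_mono N M H : (N <= M)%N -> depends_on N H -> depends_on M H.
Proof.
move=> NM HN x y xy; apply: HN => t /andP[tl tr].
by apply: xy; apply/andP; split; lia.
Qed.

Lemma finitary_pos H : finitary H -> exists2 N, (0 < N)%N & depends_on N H.
Proof. by case=> N HN; exists N.+1 => //; apply: depends_on_mono HN. Qed.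

Lemma finitary_and H1 H2 : finitary H1 -> finitary H2 -> finitary (fun x => H1 x && H2 x).
Proof.
move=> [N1 H1N] [N2 H2N]; exists (maxn N1 N2) => x y xy.
by rewrite (depends_on_mono (leq_maxl N1 N2) H1N xy)
           (depends_on_mono (leq_maxr N1 N2) H2N xy).
Qed.

Lemma finitary_coord t : finitary (fun x => x t).
Proof. by exists (absz t) => x y; apply; apply: absz_window. Qed.

Lemma finitary_ones (F : nat -> bool) a n : finitary (fun x => F (ones x a n)).
Proof.
exists (absz a + n)%N => x y xy; congr F; apply: ones_eq => i lt_in; apply: xy.
by have /andP[al ar] := absz_window a; apply/andP; split; lia.
Qed.

Lemma finitary_shift H s : finitary H -> finitary (fun x => H (fun t => x (t + s))).
Proof.
move=> [N HN]; exists (N + absz s)%N => x y xy; apply: HN => t /andP[tl tr]; apply: xy.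
by have /andP[sl sr] := absz_window s; apply/andP; split; lia.
Qed.

Lemma finitary_rev H : finitary H -> finitary (fun x => H (fun t => x (- t))).
Proof.
move=> [N HN]; exists N => x y xy; apply: HN => t /andP[tl tr].
by apply: xy; apply/andP; split; lia.
Qed.

End Finitary.

Section Patterns.
Variable N : nat.

(* A pattern on the window [-N, N]; entry [i] is the value at [i - N]. *)
Definition pattern := {ffun 'I_(N + N).+1 -> bool}.

Definition pattern_fun (p : pattern) : int -> bool :=
  fun t => p (inord (absz (t + N%:Z))).

Definition pattern_of (x : int -> bool) : pattern :=
  [ffun i : 'I_(N + N).+1 => x ((i : nat)%:Z - N%:Z)].

Lemma window_ord (i : 'I_(N + N).+1) : - N%:Z <= i%:Z - N%:Z <= N%:Z.
Proof. by have := ltn_ord i; move=> iN; apply/andP; split; lia. Qed.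

Lemma pattern_ofK x : agree N (pattern_fun (pattern_of x)) x.
Proof.
move=> t /andP[tl tr]; rewrite /pattern_fun ffunE inordK; last by lia.
by congr x; lia.
Qed.

Lemma pattern_funE (p : pattern) (i : 'I_(N + N).+1) : pattern_fun p (i%:Z - N%:Z) = p i.
Proof.
rewrite /pattern_fun; congr (p _); apply: val_inj => /=.
by rewrite inordK; have := ltn_ord i; lia.
Qed.

End Patterns.

Section Events.
Context (d : measure_display) (T : measurableType d) (R : realType).
Implicit Types (X : int -> T -> bool) (H : (int -> bool) -> bool).

Definition ev X H := [set w | H (X^~ w)].

Lemma measure_big_setU_seq (mu : {measure set T -> \bar R}) (I : choiceType) (s : seq I)
    (q : pred I) (F : I -> set T) :
  uniq s -> (forall i, measurable (F i)) -> (forall i j, i != j -> F i `&` F j = set0) ->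
  mu (\big[setU/set0]_(i <- s | q i) F i) = (\sum_(i <- s | q i) mu (F i))%E.
Proof.
move=> + mF dF; elim: s => [|a s IH] /=; first by rewrite !big_nil measure0.
move=> /andP[a_notin_s /IH {}IH]; rewrite !big_cons; case: ifP => qa //.
have mU : measurable (\big[setU/set0]_(i <- s | q i) F i) by apply: bigsetU_measurable.
rewrite measureU //; first by congr (_ + _)%E; exact: IH.
rewrite -bigcup_seq_cond; apply/seteqP; split => // w [Faw [i /andP[i_in _] Fiw]].
have ai : a != i by apply: contraNneq a_notin_s => ->.
by rewrite -(dF _ _ ai).
Qed.

Lemma measurable_coord_eq X t b : bproc_measurable X -> measurable [set w | X t w = b].
Proof.
move=> mX; case: b; first exact: mX.
rewrite (_ : [set w | _] = ~` [set w | X t w]); first exact: measurableC.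
by apply/seteqP; split => w /=; case: (X t w).
Qed.

Lemma measurable_cyl X N p : bproc_measurable X -> measurable (cyl X N N p).
Proof.
move=> mX; have -> : cyl X N N p =
    \bigcap_(i in `I_(N + N).+1) [set w | X (i%:Z - N%:Z) w = p (i%:Z - N%:Z)].
  apply/seteqP; split => w /= cw; first by move=> i /= iN; apply: cw; apply/andP; split; lia.
  move=> t /andP[tl tr]; have tN : (absz (t + N%:Z)%R < (N + N).+1)%N by lia.
  by have := cw _ tN; have -> : (absz (t + N%:Z))%:Z - N%:Z = t by lia.
by apply: bigcap_measurableType => i _; apply: measurable_coord_eq.
Qed.

Lemma ev_setI_decomp X N H B : depends_on N H ->
  ev X H `&` B = \big[setU/set0]_(p : pattern N | H (pattern_fun p))
                   (cyl X N N (pattern_fun p) `&` B).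
Proof.
move=> HN; rewrite -bigcup_seq_cond; apply/seteqP; split => w.
  move=> [Hw Bw]; exists (pattern_of N (X^~ w)); last first.
    by split => // t /pattern_ofK ->.
  by rewrite /= mem_index_enum (HN _ (X^~ w)) //; apply: pattern_ofK.
move=> [p /andP[_ Hp] [cw Bw]]; split => //.
by rewrite /ev /= (HN _ (pattern_fun p)) // => t /cw.
Qed.

Lemma cyl_setI_disjoint X N (p q : pattern N) B : p != q ->
  (cyl X N N (pattern_fun p) `&` B) `&` (cyl X N N (pattern_fun q) `&` B) = set0.
Proof.
move=> pq; apply/seteqP; split => // w [[pw _] [qw _]].
move/eqP: pq; apply; apply/ffunP => i.
by rewrite -!(pattern_funE _ i) -(pw _ (window_ord i)) -(qw _ (window_ord i)).
Qed.

Lemma measurable_ev X H : bproc_measurable X -> finitary H -> measurable (ev X H).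
Proof.
move=> mX [N HN]; rewrite -(setIT (ev X H)) (ev_setI_decomp _ _ HN).
by apply: bigsetU_measurable => p _; apply: measurableI => //; apply: measurable_cyl.
Qed.

Lemma prE (P : probability T R) A : measurable A -> P A = (pr P A)%:E.
Proof. by move=> mA; rewrite /pr fineK // fin_num_measure. Qed.

Lemma pr_ev_decomp (P : probability T R) X N H B :
  bproc_measurable X -> measurable B -> depends_on N H ->
  pr P (ev X H `&` B) =
  \sum_(p : pattern N | H (pattern_fun p)) pr P (cyl X N N (pattern_fun p) `&` B).
Proof.
move=> mX mB HN; have mcyl p : measurable (cyl X N N (pattern_fun p) `&` B).
  by apply: measurableI => //; apply: measurable_cyl.
rewrite (ev_setI_decomp _ _ HN) /pr measure_big_setU_seq //.
- by rewrite sum_fine // => p _; apply: fin_num_measure.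
- by rewrite /index_enum -enumT enum_uniq.
- by move=> p q; apply: cyl_setI_disjoint.
Qed.

End Events.

Section PairLaw.
Context (d : measure_display) (T : measurableType d) (R : realType).
Variable mu : {measure set T -> \bar R}.

Let atom (f g : T -> \bar R) a b := [set w | f w = nbar R a] `&` [set w | g w = nbar R b].

(* Enumerating the pairs [(nbar a, nbar b)] by [pickle_inv] splits [{(f, g) \in A}] into
   countably many disjoint atoms. *)
Let piece (A : set (\bar R * \bar R)) (f g : T -> \bar R) (n : nat) : set T :=
  if pickle_inv n is Some (a, b) then
    if `[< A (nbar R a, nbar R b) >] then atom f g a b else set0
  else set0.

Lemma preimage_pair_bigcup A f g : nbar_valued f -> nbar_valued g ->
  [set w | A (f w, g w)] = \bigcup_n piece A f g n.
Proof.
move=> fN gN; apply/seteqP; split => w /=.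
  move=> Afg; have [a fa] := fN w; have [b gb] := gN w.
  exists (pickle (a, b)) => //; rewrite /piece pickleK_inv.
  by rewrite -fa -gb asboolT.
move=> [n _]; rewrite /piece; case: (pickle_inv n) => [[a b]|] //.
by case: asboolP => // Aab [/= -> ->].
Qed.

Lemma trivIset_piece A f g : trivIset setT (piece A f g).
Proof.
move=> n m _ _ [w []]; rewrite /piece.
case En: (pickle_inv n) => [[a b]|]; last by [].
case Em: (pickle_inv m) => [[a' b']|]; last by case: ifP.
case: ifP => _; last by case.
move=> [/= fa gb]; case: ifP => _; last by case.
move=> [/= fa' gb'].
have [aa' bb'] : a = a' /\ b = b' by split; apply: (@nbar_inj R); rewrite -?fa -?gb.
have := @pickle_invK (option nat * option nat)%type m.
have := @pickle_invK (option nat * option nat)%type n.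
by rewrite En Em aa' bb' /= => -> ->.
Qed.

Lemma measure_nbar_pair_law A (f1 f2 g1 g2 : T -> \bar R) :
  nbar_valued f1 -> nbar_valued f2 -> nbar_valued g1 -> nbar_valued g2 ->
  (forall a b, measurable (atom f1 f2 a b)) -> (forall a b, measurable (atom g1 g2 a b)) ->
  (forall a b, mu (atom f1 f2 a b) = mu (atom g1 g2 a b)) ->
  mu [set w | A (f1 w, f2 w)] = mu [set w | A (g1 w, g2 w)].
Proof.
move=> f1N f2N g1N g2N mf mg fg.
have mpiece f g :
    (forall a b, measurable (atom f g a b)) -> forall n, measurable (piece A f g n).
  by move=> mfg n; rewrite /piece; case: (pickle_inv n) => [[a b]|] //; case: ifP.
rewrite !preimage_pair_bigcup // !measure_bigcup //; try by move=> n _; apply: mpiece.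
- apply: eq_eseriesr => n _; rewrite /piece; case: (pickle_inv n) => [[a b]|] //.
  by case: ifP.
- exact: trivIset_piece.
- exact: trivIset_piece.
Qed.

End PairLaw.

Section Prob.
Context (d : measure_display) (T : measurableType d) (R : realType).
Variable P : probability T R.

Lemma pr_ge0 A : 0 <= pr P A.
Proof. by rewrite /pr fine_ge0. Qed.

Lemma pr_le1 A : measurable A -> pr P A <= 1.
Proof. by move=> mA; rewrite -lee_fin -prE ?probability_le1. Qed.

Lemma pr_le A B : measurable A -> measurable B -> A `<=` B -> pr P A <= pr P B.
Proof. by move=> mA mB AB; rewrite -lee_fin -!prE // le_measure ?inE. Qed.

Lemma pr_setD A B : measurable A -> measurable B -> B `<=` A ->
  pr P (A `\` B) = pr P A - pr P B.
Proof.
move=> mA mB BA; apply/EFin_inj; rewrite EFinB -!prE //; last exact: measurableD.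
by rewrite measureD ?(setIidr BA) // (le_lt_trans (probability_le1 P mA)) ?ltry.
Qed.

Lemma eq0_natmul_le1 (e : R) : 0 <= e -> (forall M : nat, M%:R * e <= 1) -> e = 0.
Proof.
move=> e0 Me; apply/eqP; rewrite eq_le e0 andbT leNgt; apply/negP => e_gt0.
have := Me (Num.truncn e^-1).+1; rewrite -ler_pdivlMr // div1r leNgt.
by rewrite truncnS_gt.
Qed.

End Prob.

Section NbarSets.
Context (d : measure_display) (T : measurableType d) (R : realType).
Variables (f : T -> \bar R) (fN : nbar_valued f).

Lemma eq_set_ge_setD n : [set w | f w = (n%:R)%:E] = ge_set f n `\` ge_set f n.+1.
Proof.
apply/seteqP; split => w /=; rewrite /ge_set /=.
  by move=> ->; rewrite !lee_fin !ler_nat ltnn.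
have [[m|] ->] := fN w; rewrite /= ?leey; last by case.
by rewrite !lee_fin !ler_nat => -[nm /negP]; rewrite -ltnNge => mn; congr (_%:R%:E); lia.
Qed.

Lemma eq_pinfty_bigcap : [set w | f w = +oo%E] = \bigcap_n ge_set f n.
Proof.
apply/seteqP; split => w /=; first by move=> fw n _; rewrite /ge_set /= fw leey.
have [[m|] fw] := fN w => // /(_ m.+1 I).
by rewrite /ge_set /= fw lee_fin ler_nat ltnn.
Qed.

Lemma measurable_eq_nbar o : (forall n, measurable (ge_set f n)) ->
  measurable [set w | f w = nbar R o].
Proof.
case: o => [n|] /= mf; first by rewrite eq_set_ge_setD; apply: measurableD.
by rewrite eq_pinfty_bigcap; apply: bigcapT_measurable.
Qed.

End NbarSets.

Section GeSum.
Context (d : measure_display) (T : measurableType d) (R : realType).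
Variables (P : probability T R) (f g : T -> \bar R).
Hypotheses (fN : nbar_valued f) (gN : nbar_valued g)
  (mf : forall n, measurable (ge_set f n)) (mg : forall n, measurable (ge_set g n))
  (fg_sum : forall k l, P (ge_set f k `&` ge_set g l) = P (ge_set f (k + l))).

Let psi n := pr P (ge_set f n).

Lemma pr_eq_psi k : pr P [set w | f w = (k%:R)%:E] = psi k - psi k.+1.
Proof. by rewrite eq_set_ge_setD // pr_setD //; apply: ge_set_succ. Qed.

Lemma pr_eq_ge k l :
  pr P ([set w | f w = (k%:R)%:E] `&` ge_set g l) = pr P [set w | f w = ((k + l)%:R)%:E].
Proof.
have -> : [set w | f w = (k%:R)%:E] `&` ge_set g l =
    (ge_set f k `&` ge_set g l) `\` (ge_set f k.+1 `&` ge_set g l).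
  rewrite eq_set_ge_setD //; apply/seteqP; split => w /=.
    by move=> [[fk fk1] gl]; split => // -[].
  by move=> [[fk gl] fgkl]; split => //; split => // fk1; apply: fgkl.
rewrite pr_setD; last by move=> w [fk1 gl]; split => //; apply: ge_set_succ.
- by rewrite pr_eq_psi /psi /pr !fg_sum addSn.
- exact: measurableI.
- exact: measurableI.
Qed.

Lemma pr_eq_eq k l :
  pr P ([set w | f w = (k%:R)%:E] `&` [set w | g w = (l%:R)%:E]) =
  pr P [set w | f w = ((k + l)%:R)%:E] - pr P [set w | f w = ((k + l).+1%:R)%:E].
Proof.
have mfk : measurable [set w | f w = (k%:R)%:E] by apply: (measurable_eq_nbar fN (Some k)).
have -> : [set w | f w = (k%:R)%:E] `&` [set w | g w = (l%:R)%:E] =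
    ([set w | f w = (k%:R)%:E] `&` ge_set g l) `\`
    ([set w | f w = (k%:R)%:E] `&` ge_set g l.+1).
  rewrite (eq_set_ge_setD gN); apply/seteqP; split => w /=.
    by move=> [fk [gl gl1]]; split => // -[].
  by move=> [[fk gl] fgkl]; split => //; split => // gl1; apply: fgkl.
rewrite pr_setD ?pr_eq_ge ?addnS //; try exact: measurableI.
by move=> w [fk gl1]; split => //; apply: ge_set_succ.
Qed.

Lemma pr_eq_succ_le k :
  pr P [set w | f w = (k.+1%:R)%:E] <= pr P [set w | f w = (k%:R)%:E].
Proof. by have := pr_eq_eq k 0; rewrite addn0 -subr_ge0 => <-; apply: pr_ge0. Qed.

Lemma measure_eq_pinfty n :
  P ([set w | f w = (n%:R)%:E] `&` [set w | g w = +oo%E]) = 0%E.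
Proof.
have mfn : measurable [set w | f w = (n%:R)%:E] by apply: (measurable_eq_nbar fN (Some n)).
set E := _ `&` _.
have mE : measurable E.
  by apply: measurableI => //; apply: (measurable_eq_nbar gN None).
have E_le l : pr P E <= pr P [set w | f w = ((n + l)%:R)%:E].
  rewrite -pr_eq_ge; apply: pr_le => //; first exact: measurableI.
  by move=> w [fn goo]; split => //; rewrite /ge_set /= goo leey.
have E_sum M : M%:R * pr P E <= psi n - psi (n + M).
  elim: M => [|M IH]; first by rewrite mul0r addn0 subrr.
  by have := E_le M; rewrite pr_eq_psi -addnS -natr1 mulrDl mul1r; lra.
rewrite prE // (eq0_natmul_le1 (pr_ge0 P E)) // => M.
apply: le_trans (E_sum M) _; rewrite /psi.
by have := pr_le1 P (mf n); have := pr_ge0 P (ge_set f (n + M)); lra.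
Qed.

End GeSum.

Section LawSwap.
Context (d : measure_display) (T : measurableType d) (R : realType).
Variables (P : probability T R) (f g : T -> \bar R).
Hypotheses (fN : nbar_valued f) (gN : nbar_valued g)
  (mf : forall n, measurable (ge_set f n)) (mg : forall n, measurable (ge_set g n))
  (fg_sum : forall k l, P (ge_set f k `&` ge_set g l) = P (ge_set f (k + l))).

(* Taking [k = 0] in [fg_sum] shows that [f] and [g] have the same tails. *)
Lemma ge_sum_swap k l : P (ge_set g k `&` ge_set f l) = P (ge_set g (k + l)).
Proof.
have same_tail m : P (ge_set g m) = P (ge_set f m).
  by rewrite -(setTI (ge_set g m)) -(ge_set0 fN) fg_sum.
by rewrite setIC fg_sum addnC same_tail.
Qed.

Lemma law_swap A : P [set w | A (g w, f w)] = P [set w | A (f w, g w)].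
Proof.
have m_atom (h1 h2 : T -> \bar R) : nbar_valued h1 -> nbar_valued h2 ->
    (forall n, measurable (ge_set h1 n)) -> (forall n, measurable (ge_set h2 n)) ->
    forall a b, measurable ([set w | h1 w = nbar R a] `&` [set w | h2 w = nbar R b]).
  move=> h1N h2N mh1 mh2 a b.
  by apply: measurableI; [exact: measurable_eq_nbar h1N a mh1|
                          exact: measurable_eq_nbar h2N b mh2].
have m_fg a b := m_atom f g fN gN mf mg (Some a) (Some b).
have null_fg a : P ([set w | f w = (a%:R)%:E] `&` [set w | g w = +oo%E]) = 0%E.
  exact: measure_eq_pinfty fN gN mf mg fg_sum a.
have null_gf a : P ([set w | g w = (a%:R)%:E] `&` [set w | f w = +oo%E]) = 0%E.
  exact: measure_eq_pinfty gN fN mg mf ge_sum_swap a.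
have atom_swap a b : P ([set w | g w = nbar R a] `&` [set w | f w = nbar R b]) =
                     P ([set w | f w = nbar R a] `&` [set w | g w = nbar R b]).
  case: a b => [a|] [b|] /=.
  - rewrite setIC !prE; [|exact: m_fg..].
    by rewrite !pr_eq_eq // addnC.
  - by rewrite null_gf null_fg.
  - rewrite (setIC [set w | g w = +oo%E]) (setIC [set w | f w = +oo%E]).
    by rewrite null_fg null_gf.
  - by rewrite setIC.
by apply: measure_nbar_pair_law => //; exact: m_atom.
Qed.

End LawSwap.

Section FirstOne.
Variables (k l u j : nat).
Implicit Type x : int -> bool.

(* The part of [{x 0, S+ >= k, S- >= l+1}] whose nearest 1 left of 0 is at [-(j+1)],
   with both counts truncated to [u] sites so that it is finitary. *)
Definition left_first x : bool :=
  [&& x 0, x (- j.+1%:Z), ones (fun t => x (- t)) 1 j == 0%N,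
      (l <= ones (fun t => x (- t)) j.+2%:Z (u - j.+1))%N & (k <= ones x 1 u)%N].

Definition right_first x : bool := left_first (fun t => x (t + j.+1%:Z)).

Lemma finitary_left_first : finitary left_first.
Proof.
rewrite /left_first; repeat apply: finitary_and; try exact: finitary_coord.
- exact: (finitary_rev (finitary_ones (fun c => c == 0%N) _ _)).
- exact: (finitary_rev (finitary_ones (fun c => l <= c)%N _ _)).
- exact: (finitary_ones (fun c => k <= c)%N).
Qed.

Lemma finitary_right_first : finitary right_first.
Proof. exact: (finitary_shift _ finitary_left_first). Qed.

Lemma right_firstE x : right_first x =
  [&& x j.+1%:Z, x 0, ones x 1 j == 0%N,
      (l <= ones (fun t => x (- t)) 1 (u - j.+1))%N & (k <= ones x j.+2%:Z u)%N].
Proof.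
rewrite /right_first /left_first add0r addNr.
have -> : ones (fun t => x (- t + j.+1%:Z)) 1 j = ones x 1 j.
  by rewrite (ones_rev (fun t => x (t + j.+1%:Z))) ones_shift; congr ones; lia.
have -> : ones (fun t => x (- t + j.+1%:Z)) j.+2%:Z (u - j.+1) =
          ones (fun t => x (- t)) 1 (u - j.+1).
  by apply: ones_eq => i _; congr x; lia.
have -> : ones (fun t => x (t + j.+1%:Z)) 1 u = ones x j.+2%:Z u.
  by apply: ones_eq => i _; congr x; lia.
by [].
Qed.

End FirstOne.

Section FirstOneUniq.
Variables (k l u : nat).
Implicit Type x : int -> bool.

Lemma left_first_uniq i j x : left_first k l u i x -> left_first k l u j x -> i = j.
Proof.
move=> /and5P[_ xi /eqP none_i _ _] /and5P[_ xj /eqP none_j _ _].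
case: (ltngtP i j) => // ij.
  by have := @ones_gt0 (fun t => x (- t)) 1 j i ij xi; rewrite none_j.
by have := @ones_gt0 (fun t => x (- t)) 1 i j ij xj; rewrite none_i.
Qed.

Lemma right_first_uniq i j x : right_first k l u i x -> right_first k l u j x -> i = j.
Proof.
rewrite !right_firstE => /and5P[xi _ /eqP none_i _ _] /and5P[xj _ /eqP none_j _ _].
case: (ltngtP i j) => // ij.
  by have := @ones_gt0 x 1 j i ij xi; rewrite none_j.
by have := @ones_gt0 x 1 i j ij xj; rewrite none_i.
Qed.

Lemma left_first_mono j v x : (u <= v)%N -> left_first k l u j x -> left_first k l v j x.
Proof.
move=> uv /and5P[x0 xj none lS kS]; apply/and5P; split => //.
- by apply: leq_trans lS (ones_mono _ _ _); apply: leq_sub2r.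
- exact: leq_trans kS (ones_mono _ _ uv).
Qed.

End FirstOneUniq.

Section GeSets.
Context (R : realType) (d : measure_display) (T : measurableType d).
Implicit Type X : int -> T -> bool.

Lemma measurable_ge_Splus X k : bproc_measurable X -> measurable (ge_set (Splus R X) k).
Proof.
move=> mX; have -> : ge_set (Splus R X) k = \bigcup_N ev X (fun x => (k <= ones x 1 N)%N).
  apply/seteqP; split => w; first by move/Splus_geP => [N]; exists N.
  by move=> [N _ kN]; apply/Splus_geP; exists N.
apply: bigcupT_measurable => N; apply: measurable_ev => //.
exact: (finitary_ones (fun c => k <= c)%N).
Qed.

Lemma measurable_ge_Sminus X k :
  bproc_measurable X -> measurable (ge_set (Sminus R X) k).
Proof. by move=> mX; rewrite SminusE; apply: measurable_ge_Splus => t; apply: mX. Qed.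

End GeSets.

Lemma homo_bigcup_ord (T : Type) (F : nat -> nat -> set T) :
  (forall u v j, (u <= v)%N -> F u j `<=` F v j) ->
  {homo (fun u => \bigcup_(j < u) F u j) : n m / (n <= m)%N >-> (n <= m)%O}.
Proof.
move=> Fmono n m nm; apply/subsetPset => w [j jn Fj].
by exists j; [apply: leq_trans jn nm|apply: Fmono nm _ _].
Qed.

Section Palm.
Local Unset Implicit Arguments.
Context (R : realType) (d : measure_display) (Omega : measurableType d)
  (P : probability Omega R) (I : int -> Omega -> bool)
  (dn : nat -> measure_display) (Omegan : forall n, measurableType (dn n))
  (Pn : forall n, probability (Omegan n) R)
  (In : forall n, int -> Omegan n -> bool).
Hypotheses (mI : bproc_measurable I) (mIn : forall n : nat, bproc_measurable (In n))
  (stat : forall n : nat, bstationary (Pn n) (In n))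
  (pos : forall n : nat, (0 < Pn n [set w | In n 0 w])%E)
  (conv : forall (u v : nat), (0 < u)%N -> (0 < v)%N -> forall p : int -> bool,
     (fun n => pr (Pn n) (cyl (In n) u v p `&` [set w | In n 0 w])
               / pr (Pn n) [set w | In n 0 w]) @ \oo
       --> pr P (cyl I u v p)).
Local Set Implicit Arguments.

Let palm_pr n H :=
  pr (Pn n) (ev (In n) H `&` [set w | In n 0 w]) / pr (Pn n) [set w | In n 0 w].

Lemma pr_In0_gt0 n : 0 < pr (Pn n) [set w | In n 0 w].
Proof.
apply: fine_gt0; rewrite pos /=.
by rewrite (le_lt_trans (probability_le1 _ (mIn n 0))) ?ltry.
Qed.

Lemma palm_pr_cvg H : finitary H -> palm_pr n H @[n --> \oo] --> pr P (ev I H).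
Proof.
case/finitary_pos => N N_gt0 HN.
have -> : (fun n => palm_pr n H) = (fun n => \sum_(p : pattern N | H (pattern_fun p))
    (pr (Pn n) (cyl (In n) N N (pattern_fun p) `&` [set w | In n 0 w])
     / pr (Pn n) [set w | In n 0 w])).
  by apply/funext => n; rewrite /palm_pr (pr_ev_decomp _ (mIn n) (mIn n 0) HN) mulr_suml.
rewrite -(setIT (ev I H)) (pr_ev_decomp _ mI measurableT HN).
under eq_bigr do rewrite setIT.
by apply: (@cvg_big R _ +%R 0 _ add_continuous) => p _; apply: conv.
Qed.

Lemma pr_I0 : pr P [set w | I 0 w] = 1.
Proof.
have := palm_pr_cvg (finitary_coord 0).
have -> : (fun n => palm_pr n (fun x => x 0)) = fun=> 1.
  by apply/funext => n; rewrite /palm_pr setIid divff // gt_eqF // pr_In0_gt0.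
by move=> cvg1; apply/esym; apply: cvg_unique (cvg_cst (1 : R)) cvg1.
Qed.

(* Under [Pn n] conditioned on [In n 0], both events lie in [{In n 0}], so stationarity
   of [In n] equates their conditional probabilities; pass to the limit. *)
Lemma measure_shift H s : finitary H -> (forall x, H x -> x 0 && x (- s)) ->
  P (ev I H) = P (ev I (fun x => H (fun t => x (t + s)))).
Proof.
move=> Hfin H0s; set Hs := fun x => H (fun t => x (t + s)).
have Hsfin : finitary Hs by apply: finitary_shift.
rewrite !prE; try exact: measurable_ev; congr EFin.
suff palm_pr_eq : (fun n => palm_pr n H) = (fun n => palm_pr n Hs).
  have := palm_pr_cvg Hfin; rewrite palm_pr_eq => cvgH.
  exact: cvg_unique cvgH (palm_pr_cvg Hsfin).
apply/funext => n; rewrite /palm_pr.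
have -> : ev (In n) H `&` [set w | In n 0 w] = ev (In n) H.
  by apply/setIidl => w /H0s /andP[].
have -> : ev (In n) Hs `&` [set w | In n 0 w] = ev (In n) Hs.
  by apply/setIidl => w /H0s /andP[_]; rewrite /= addNr.
congr (_ / _); case: Hfin => N HN.
have mIns : bproc_measurable (fun t => In n (t + s)) by move=> t; apply: mIn.
rewrite -(setIT (ev _ H)) -(setIT (ev _ Hs)) (pr_ev_decomp _ (mIn n) measurableT HN).
rewrite (pr_ev_decomp _ mIns measurableT HN).
by apply: eq_bigr => p _; rewrite !setIT /pr (stat n N N (pattern_fun p) s).
Qed.

Lemma measure_I0_setI E : measurable E -> P ([set w | I 0 w] `&` E) = P E.
Proof.
move=> mE; have nullC : P (~` [set w | I 0 w]) = 0%E.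
  by rewrite probability_setC // prE // pr_I0 subee.
rewrite [RHS](measureDI P mE (mI 0)) setIC.
by rewrite (subset_measure0 (measurableD mE (mI 0)) (measurableC (mI 0)) _ nullC) ?add0e.
Qed.

Let Sp := Splus R I.
Let Sm := Sminus R I.
Let left_union k l u := \bigcup_(j < u) ev I (left_first k l u j).
Let right_union k l u := \bigcup_(j < u) ev I (right_first k l u j).

Let measurable_ge_setI k l : measurable (ge_set Sp k `&` ge_set Sm l).
Proof. by apply: measurableI; [apply: measurable_ge_Splus|apply: measurable_ge_Sminus]. Qed.

Lemma bigcup_left_union k l :
  \bigcup_u left_union k l u = [set w | I 0 w] `&` (ge_set Sp k `&` ge_set Sm l.+1).
Proof.
apply/seteqP; split => w.
  move=> [u _ [j ju /and5P[I0 Ij /eqP none lS kS]]].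
  split => //; split; first by apply/Splus_geP; exists u.
  rewrite /Sm SminusE; apply/Splus_geP; exists u.
  by rewrite (ones_split _ ju) none /= Ij add0n add1n ltnS.
move=> [I0 [/Splus_geP [N1 kN1]]]; rewrite /Sm SminusE => /Splus_geP [N2 lN2].
have lN : (l.+1 <= ones (fun t => I (- t) w) 1 (N1 + N2))%N.
  exact: leq_trans lN2 (ones_mono _ _ (leq_addl _ _)).
have [j jN [Ij none]] := ones_first (leq_trans (ltn0Sn l) lN).
exists (N1 + N2)%N => //; exists j => //; apply/and5P; split => //; first by rewrite none.
  by move: lN; rewrite (ones_split _ jN) none /= Ij add0n add1n ltnS.
exact: leq_trans kN1 (ones_mono _ _ (leq_addr _ _)).
Qed.

Lemma bigcup_right_union k l :
  \bigcup_u right_union k l u = [set w | I 0 w] `&` (ge_set Sp k.+1 `&` ge_set Sm l).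
Proof.
apply/seteqP; split => w.
  move=> [u _ [j ju]]; rewrite /ev /= right_firstE => /and5P[Ij I0 /eqP none lS kS].
  split => //; split; last by rewrite /Sm SminusE; apply/Splus_geP; exists (u - j.+1)%N.
  apply/Splus_geP; exists (j.+1 + u)%N.
  by rewrite (ones_split _ (leq_addr u j.+1)) none addKn /= Ij.
move=> [I0 [/Splus_geP [N1 kN1]]]; rewrite /Sm SminusE => /Splus_geP [N2 lN2].
have [j jN [Ij none]] := ones_first (leq_trans (ltn0Sn k) kN1).
exists (N1 + N2)%N => //; exists j; first exact: leq_trans jN (leq_addr _ _).
rewrite /ev /= right_firstE I0 Ij none eqxx /=.
move: kN1; rewrite (ones_split _ jN) none Ij add0n add1n ltnS => kN1.
by apply/andP; split; [apply: leq_trans lN2 _|apply: leq_trans kN1 _]; apply: ones_mono; lia.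
Qed.

Lemma measure_left_right_union k l u : P (left_union k l u) = P (right_union k l u).
Proof.
have mL j : measurable (ev I (left_first k l u j)).
  exact: measurable_ev mI (finitary_left_first _ _ _ _).
have mR j : measurable (ev I (right_first k l u j)).
  exact: measurable_ev mI (finitary_right_first _ _ _ _).
rewrite /left_union /right_union !bigcup_mkord.
rewrite (measure_semi_additive (fun j => ev I (left_first k l u j)) u) //.
rewrite (measure_semi_additive (fun j => ev I (right_first k l u j)) u) //.
- apply: eq_bigr => j _; apply: measure_shift; first exact: finitary_left_first.
  by move=> x /and5P[-> -> _ _ _].
- by move=> i j _ _ [w [Ri Rj]]; apply: right_first_uniq Ri Rj.
- by apply: bigsetU_measurable.
- by move=> i j _ _ [w [Li Lj]]; apply: left_first_uniq Li Lj.
- by apply: bigsetU_measurable.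
Qed.

Lemma measure_ge_transfer k l :
  P (ge_set Sp k `&` ge_set Sm l.+1) = P (ge_set Sp k.+1 `&` ge_set Sm l).
Proof.
have mL u : measurable (left_union k l u).
  by apply: bigcup_measurable => j _; apply: measurable_ev mI (finitary_left_first _ _ _ _).
have mR u : measurable (right_union k l u).
  by apply: bigcup_measurable => j _; apply: measurable_ev mI (finitary_right_first _ _ _ _).
have cvgL := nondecreasing_cvg_mu (mu := P) mL (bigcupT_measurable _ mL)
  (homo_bigcup_ord (fun u v j uv x => left_first_mono uv)).
have cvgR := nondecreasing_cvg_mu (mu := P) mR (bigcupT_measurable _ mR)
  (homo_bigcup_ord (fun u v j uv x => left_first_mono uv)).
have LR : P \o left_union k l = P \o right_union k l.
  by apply/funext => u /=; apply: measure_left_right_union.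
have {}cvgL : (P \o right_union k l) @ \oo --> P (\bigcup_u left_union k l u).
  by rewrite -LR; exact: cvgL.
rewrite -measure_I0_setI // -[RHS]measure_I0_setI //.
by rewrite -bigcup_left_union -bigcup_right_union; apply: cvg_unique cvgL cvgR.
Qed.

Lemma measure_ge_sum k l : P (ge_set Sp k `&` ge_set Sm l) = P (ge_set Sp (k + l)).
Proof.
elim: l k => [|l IH] k.
  by rewrite addn0 /Sm SminusE ge_set0 ?setIT //; apply: Splus_nbar.
by rewrite measure_ge_transfer IH addSnnS.
Qed.

End Palm.

Unset Implicit Arguments.

Theorem theorem3p2 (R : realType)
  (d : measure_display) (Omega : measurableType d) (P : probability Omega R)
  (I : int -> Omega -> bool)
  (dn : nat -> measure_display) (Omegan : forall n, measurableType (dn n))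
  (Pn : forall n, probability (Omegan n) R)
  (In : forall n, int -> Omegan n -> bool) :
  bproc_measurable I ->
  (forall n, bproc_measurable (In n)) ->
  (forall n, bstationary (Pn n) (In n)) ->
  (forall n, (0 < Pn n [set w | In n (0:int) w])%E) ->
  (forall (u v : nat), (0 < u)%N -> (0 < v)%N -> forall p : int -> bool,
     (fun n => pr (Pn n) (cyl (In n) u v p `&` [set w | In n (0:int) w])
               / pr (Pn n) [set w | In n (0:int) w]) @ \oo
       --> pr P (cyl I u v p)) ->
  let Sp := Splus R I in
  let Sm := Sminus R I in
  (* (a) symmetry of the joint law of (S_-, S_+) *)
  (forall A : set (\bar R * \bar R), measurable A ->
     P [set w | A (Sm w, Sp w)] = P [set w | A (Sp w, Sm w)]) /\
  (* in particular S_- and S_+ have the same law *)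
  (forall A : set (\bar R), measurable A ->
     P [set w | A (Sm w)] = P [set w | A (Sp w)]) /\
  (forall k l : nat,
     pr P ([set w | Sp w = (k%:R)%:E] `&` [set w | ((l%:R)%:E <= Sm w)%E])
     = pr P [set w | Sp w = ((k + l)%:R)%:E]) /\
  (forall k l : nat,
     pr P ([set w | Sp w = (k%:R)%:E] `&` [set w | Sm w = (l%:R)%:E])
     = pr P [set w | Sp w = ((k + l)%:R)%:E]
       - pr P [set w | Sp w = ((k + l).+1%:R)%:E]) /\
  (* (b) the common pmf is nonincreasing on N_0 *)
  (forall k : nat,
     pr P [set w | Sp w = (k.+1%:R)%:E] <= pr P [set w | Sp w = (k%:R)%:E]).
Proof.
move=> mI mIn stat pos conv Sp Sm.
have SpN : nbar_valued Sp by apply: Splus_nbar.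
have SmN : nbar_valued Sm by rewrite /Sm SminusE; apply: Splus_nbar.
have mSp n : measurable (ge_set Sp n) by apply: measurable_ge_Splus.
have mSm n : measurable (ge_set Sm n) by apply: measurable_ge_Sminus.
have ge_sum := measure_ge_sum mI mIn stat pos conv.
have swap := law_swap SpN SmN mSp mSm ge_sum.
split; first by move=> A _; apply: swap.
split; first by move=> A _; apply: (swap [set p | A p.1]).
split; first by move=> k l; exact: pr_eq_ge SpN mSp mSm ge_sum k l.
split; first by move=> k l; exact: pr_eq_eq SpN SmN mSp mSm ge_sum k l.
by move=> k; exact: pr_eq_succ_le SpN SmN mSp mSm ge_sum k.
Qed.
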